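(* Let $G$ and $H$ be finite AC-groups such that $B_G(t)=B_H(t)$. Then $k(G)=k(H)$, where $k(\cdot)$ denotes the number of conjugacy classes.
   Context: A finite group $G$ is an AC-group if the centralizer of every non-central element is abelian. For a finite group $G$ and $n\ge0$, let $G^{(n)}\subseteq G^n$ be the set of $n$-tuples of pairwise commuting elements, on which $G$ acts by simultaneous conjugation; let $\beta_{G,n}$ be the number of orbits and $B_G(t)=\sum_{n\ge0}\beta_{G,n}t^n$. *)

From mathcomp Require Import all_boot all_fingroup all_solvable.
Set Implicit Arguments. Unset Strict Implicit. Unset Printing Implicit Defensive.
Local Open Scope group_scope.

Definition AC_group (gT : finGroupType) (G : {group gT}) : Prop :=
  forall x, x \in G -> x \notin 'Z(G) -> abelian 'C_G[x].

Definition comm_tuples (gT : finGroupType) (G : {group gT}) (n : nat)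
  : {set {ffun 'I_n -> gT}} :=
  [set t : {ffun 'I_n -> gT} |
     [forall i, t i \in G] && [forall i, forall j, t i * t j == t j * t i]].

Definition sim_conj_orbit (gT : finGroupType) (G : {group gT}) (n : nat)
  (t : {ffun 'I_n -> gT}) : {set {ffun 'I_n -> gT}} :=
  [set [ffun i => t i ^ g] | g in G].

Definition beta (gT : finGroupType) (G : {group gT}) (n : nat) : nat :=
  #|[set sim_conj_orbit G t | t in comm_tuples G n]|.

Definition kclasses (gT : finGroupType) (G : {group gT}) : nat := #|classes G|.

From mathcomp Require Import all_boot all_fingroup all_solvable.
Set Implicit Arguments. Unset Strict Implicit. Unset Printing Implicit Defensive.
Local Open Scope group_scope.

Section OneTuples.

Variables (gT : finGroupType) (G : {group gT}).

Definition tuple1 (x : gT) : {ffun 'I_1 -> gT} := [ffun=> x].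

Lemma tuple1_inj : injective tuple1.
Proof. by move=> x y /ffunP /(_ ord0); rewrite !ffunE. Qed.

Lemma comm_tuples1 : comm_tuples G 1 = tuple1 @: G.
Proof.
apply/setP => t; rewrite inE; apply/andP/imsetP.
  case=> /forallP tG _; exists (t ord0) => //.
  by apply/ffunP => i; rewrite ffunE (ord1 i).
case=> x xG ->; split; apply/forallP => i; rewrite ?ffunE //.
by apply/forallP => j; rewrite !ffunE.
Qed.

Lemma sim_conj_orbit1 x : sim_conj_orbit G (tuple1 x) = tuple1 @: (x ^: G).
Proof.
rewrite /sim_conj_orbit -imset_comp; apply: eq_imset => g /=.
by apply/ffunP => i; rewrite !ffunE.
Qed.

Lemma beta1 : beta G 1 = kclasses G.
Proof.
rewrite /beta /kclasses comm_tuples1 -imset_comp.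
rewrite (eq_imset _ sim_conj_orbit1)
        (imset_comp (fun A : {set gT} => tuple1 @: A) (class^~ G)).
by rewrite card_imset //; apply/imset_inj/tuple1_inj.
Qed.

End OneTuples.

(* Only the coefficient of t^1 is used: it counts conjugacy classes. *)
Theorem lemma6p4 (gT hT : finGroupType) (G : {group gT}) (H : {group hT}) :
  AC_group G -> AC_group H ->
  (forall n : nat, beta G n = beta H n) ->
  kclasses G = kclasses H.
Proof. by move=> _ _ betaGH; rewrite -!beta1 betaGH. Qed.
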